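(* There is a function $\varepsilon(k)\to0$ as $k\to\infty$ such that for every integer $k\ge2$, every family $F$ of functions with codomain $\{0,1,\dots,k-1\}$, and every nonnegative integer $\eta$, \[\mathrm{opt}_{\mathrm{ag}}(F,\eta)\le (1+\varepsilon(k))\,k\ln k\,(\mathrm{opt}_{\mathrm{std}}(F)+\eta).\]
   Context: Let $F$ be a family of functions from a set $X$ to a set $Y$. Online learning of $F$ is a game between a learner and an adversary: the adversary secretly fixes some $f\in F$ and presents inputs $x_1,x_2,\dots\in X$ one at a time, chosen adaptively; after each input $x_t$ the learner guesses a value for $f(x_t)$; a mistake is an incorrect guess. In the standard model, after each guess the adversary reveals $f(x_t)$, and $\mathrm{opt}_{\mathrm{std}}(F)$ is the maximum number of mistakes under optimal play by both sides. In the agnostic model with parameter $\eta$, after each guess the adversary only says YES or NO, but may give incorrect feedback (a wrong YES/NO) in up to $\eta$ rounds; $\mathrm{opt}_{\mathrm{ag}}(F,\eta)$ is the worst-case number of mistakes of the learner (with respect to the chosen $f$) when both learner and adversary play optimally. *)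

From mathcomp Require Import all_boot.
From Stdlib Require Import Reals.

Set Implicit Arguments.
Unset Strict Implicit.
Unset Printing Implicit Defensive.

Section OnlineLearning.
Variables (X : Type) (Y : eqType).

(* ---------- Standard model ----------
   A (deterministic) learner maps the history of past rounds (input, revealed
   true label) and the current input to a guess. *)
Definition std_learner := seq (X * Y) -> X -> Y.

Fixpoint std_mistakes (L : std_learner) (f : X -> Y) (h : seq (X * Y))
    (xs : seq X) : nat :=
  match xs with
  | [::] => 0
  | x :: xs' => (L h x != f x) + std_mistakes L f (rcons h (x, f x)) xs'
  end.

Definition std_bound (F : (X -> Y) -> Prop) (m : nat) : Prop :=
  exists L : std_learner, forall f, F f -> forall xs : seq X,
    std_mistakes L f [::] xs <= m.

Definition is_opt_std (F : (X -> Y) -> Prop) (d : nat) : Prop :=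
  std_bound F d /\ forall m, std_bound F m -> d <= m.

(* ---------- Agnostic model with parameter eta ----------
   History: (input, guess, YES/NO answer received). *)
Definition ag_learner := seq (X * Y * bool) -> X -> Y.

(* Each round of the adversary is an input together with a flag saying whether
   the adversary lies (flips the correct YES/NO answer) in that round. *)
Fixpoint ag_mistakes (L : ag_learner) (f : X -> Y) (h : seq (X * Y * bool))
    (xs : seq (X * bool)) : nat :=
  match xs with
  | [::] => 0
  | (x, lie) :: xs' =>
      let y := L h x in
      (y != f x) + ag_mistakes L f (rcons h (x, y, (y == f x) (+) lie)) xs'
  end.

Definition ag_bound (F : (X -> Y) -> Prop) (eta m : nat) : Prop :=
  exists L : ag_learner, forall f, F f -> forall xs : seq (X * bool),
    count snd xs <= eta -> ag_mistakes L f [::] xs <= m.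

Definition is_opt_ag (F : (X -> Y) -> Prop) (eta a : nat) : Prop :=
  ag_bound F eta a /\ forall m, ag_bound F eta m -> a <= m.

End OnlineLearning.

(* The agnostic learner runs a weighted population of experts, copies of an
   optimal standard learner A, each fed with its own guess of which past rounds
   were mistakes of A and of their true labels, and it predicts the label with
   the largest total weight of votes.  After a NO answer the copies that voted
   for the rejected label, which carry at least a 1/k fraction of the total
   weight, keep only a fraction tau + rho of their weight, so the total weight
   drops by the factor 1 - (1 - tau - rho)/k.  The copy whose guesses are right
   sees exactly the true labels of the mistakes of A and ignores the lies, so
   its weight stays at least (rho/k)^d tau^eta.  Hence there are at most
   k/(1 - tau - rho) (d ln(k/rho) + eta ln(1/tau)) NO answers, and each mistake
   of the learner either gets a NO answer or is a lie.  The choice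
   tau = rho = 1/(ln k + 3) gives (1 + eps(k)) k ln k (d + eta). *)

From HB Require Import structures.
From mathcomp Require Import all_boot zify.
From Stdlib Require Import Reals Lra Classical Zfloor.

Set Implicit Arguments.
Unset Strict Implicit.
Unset Printing Implicit Defensive.

HB.instance Definition _ := Monoid.isComLaw.Build R 0%R Rplus
  (fun a b c => esym (Rplus_assoc a b c)) Rplus_comm Rplus_0_l.

Local Open Scope R_scope.

Lemma In_mem (T : eqType) (x : T) (s : seq T) : x \in s -> List.In x s.
Proof. by elim: s => //= y s IH; rewrite in_cons => /orP[/eqP->|/IH]; [left|right]. Qed.

Lemma iter_Rplus (n : nat) (c : R) : iter n (Rplus c) 0 = INR n * c.
Proof. by elim: n => [|n IH]; rewrite ?iterS ?IH ?S_INR /=; ring. Qed.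

Lemma Rle_pow_le1 (a : R) m n : 0 <= a <= 1 -> (m <= n)%nat -> a ^ n <= a ^ m.
Proof.
move=> a01 /subnKC <-; rewrite pow_add.
have : a ^ (n - m) <= 1 by rewrite -(pow1 (n - m)); apply: pow_incr.
have := pow_le a m (proj1 a01); nra.
Qed.

Lemma Rdiv_le_self (a K : R) : 0 <= a -> 1 <= K -> a / K <= a.
Proof.
move=> a_ge0 K_ge1; have : a / K * K = a by field; lra.
have : 0 <= a / K by apply: Rle_mult_inv_pos; lra.
nra.
Qed.

Lemma ln_le_ln x y : 0 < x -> x <= y -> ln x <= ln y.
Proof. by move=> x_gt0 [/(ln_increasing _ _ x_gt0)|->]; lra. Qed.

Lemma ln_le_sub1 x : 0 < x -> ln x <= x - 1.
Proof. by move=> x_gt0; have := exp_ineq1_le (ln x); rewrite exp_ln //; lra. Qed.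

Lemma exponent_le_of_pow_le (a b t : R) (m n N : nat) :
  0 < a -> 0 < b -> t < 1 -> a ^ m * b ^ n <= (1 - t) ^ N ->
  INR N * t <= INR m * - ln a + INR n * - ln b.
Proof.
move=> a_gt0 b_gt0 t_lt1 le_pow.
have /ln_le_ln/(_ le_pow) : 0 < a ^ m * b ^ n by apply: Rmult_lt_0_compat; apply: pow_lt.
rewrite ln_mult ?ln_pow; try (by apply: pow_lt) || lra.
have : ln (1 - t) <= - t by have := @ln_le_sub1 (1 - t); lra.
have := pos_INR N; nra.
Qed.

Definition argmaxR (T : finType) (i0 : T) (F : T -> R) : T :=
  foldl (fun i j => if Rlt_dec (F i) (F j) then j else i) i0 (enum T).

Lemma argmaxR_ge (T : finType) (i0 : T) (F : T -> R) (j : T) : F j <= F (argmaxR i0 F).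
Proof.
rewrite /argmaxR; set step := fun i j => _.
have fold_ge s i :
    F i <= F (foldl step i s) /\ forall j, j \in s -> F j <= F (foldl step i s).
  elim: s i => [|j' s IH] i /=; first by split; [lra|].
  have [ge_i ge_s] := IH (step i j'); rewrite /step in ge_i ge_s *.
  split=> [|j'']; first by case: Rlt_dec ge_i => /=; lra.
  by rewrite in_cons => /orP[/eqP->|/ge_s //]; case: Rlt_dec ge_i => /=; lra.
by apply: (proj2 (fold_ge _ i0)); rewrite mem_enum.
Qed.

Lemma sum_le_card_argmaxR (T : finType) (i0 : T) (F : T -> R) :
  \big[Rplus/0]_(i : T) F i <= INR #|T| * F (argmaxR i0 F).
Proof.
rewrite -iter_Rplus -big_const.
by apply: (big_ind2 Rle) => [|? ? ? ? ? ?|i _]; [lra|lra|apply: argmaxR_ge].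
Qed.

Section Population.
Variables (X : Type) (k : nat) (A : std_learner X 'I_k) (y0 : 'I_k) (rho tau : R).

Definition expert := (R * seq (X * 'I_k))%type.

(* On YES for a label y it did not predict, a copy splits into "A erred and the
   label is y" (weight 1 - tau) and "the answer was a lie" (tau); on NO for the
   label it predicted, into "the answer was a lie" (tau) and "A erred", spread
   over the k candidate labels (rho/k each). *)
Definition children (e : expert) (x : X) (y : 'I_k) (yes : bool) : seq expert :=
  if yes then
    if A e.2 x == y then [:: e]
    else [:: (e.1 * (1 - tau), rcons e.2 (x, y)); (e.1 * tau, e.2)]
  else
    if A e.2 x == y then
      (e.1 * tau, e.2) :: [seq (e.1 * (rho / INR k), rcons e.2 (x, l)) | l <- enum 'I_k]
    else [:: e].

Definition update (P : seq expert) x y yes := List.flat_map (children ^~ x ^~ y ^~ yes) P.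

Definition weight (P : seq expert) := \big[Rplus/0]_(e <- P) e.1.

Definition vote (P : seq expert) x y := \big[Rplus/0]_(e <- P | A e.2 x == y) e.1.

Definition population (hist : seq (X * 'I_k * bool)) :=
  foldl (fun P t => update P t.1.1 t.1.2 t.2) [:: (1, [::])] hist.

Definition plurality_learner : ag_learner X 'I_k :=
  fun hist x => argmaxR y0 (vote (population hist) x).

Lemma population_rcons hist t :
  population (rcons hist t) = update (population hist) t.1.1 t.1.2 t.2.
Proof. by rewrite /population foldl_rcons. Qed.

Lemma INR_k_ge1 : 1 <= INR k.
Proof. exact/(le_INR 1)/leP/(leq_ltn_trans (leq0n _) (ltn_ord y0)). Qed.

Lemma INR_k_gt0 : 0 < INR k.
Proof. by have := INR_k_ge1; lra. Qed.

Lemma sum_vote P x : \big[Rplus/0]_(y : 'I_k) vote P x y = weight P.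
Proof.
rewrite /vote; under eq_bigr do rewrite big_mkcond.
rewrite exchange_big; apply: eq_bigr => e _.
by rewrite -big_mkcond (big_pred1 (A e.2 x)) // => y; rewrite eq_sym.
Qed.

Lemma weight_le_plurality_vote P x :
  weight P <= INR k * vote P x (argmaxR y0 (vote P x)).
Proof. by have := sum_le_card_argmaxR y0 (vote P x); rewrite card_ord sum_vote. Qed.

Lemma weight_cons e P : weight (e :: P) = e.1 + weight P.
Proof. by rewrite /weight big_cons. Qed.

Lemma weight_children e x y yes :
  weight (children e x y yes) =
  e.1 - (if ~~ yes && (A e.2 x == y) then (1 - tau - rho) * e.1 else 0).
Proof.
rewrite /children /weight; case: yes; case: eqP => _;
  rewrite ?big_cons ?big_nil ?big_map ?big_enum ?big_const_ord ?iter_Rplus /=; try ring.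
by field; apply/Rgt_not_eq/INR_k_gt0.
Qed.

Lemma weight_cat P Q : weight (P ++ Q) = weight P + weight Q.
Proof. exact: big_cat. Qed.

Lemma vote_cons e P x y :
  vote (e :: P) x y = (if A e.2 x == y then e.1 else 0) + vote P x y.
Proof. by rewrite /vote big_cons; case: ifP => _ //; ring. Qed.

Lemma weight_update P x y yes :
  weight (update P x y yes) =
  weight P - (if yes then 0 else (1 - tau - rho) * vote P x y).
Proof.
elim: P => [|e P IH]; first by rewrite /weight /vote !big_nil; case: yes; ring.
have -> : update (e :: P) x y yes = children e x y yes ++ update P x y yes by [].
rewrite weight_cat weight_children IH weight_cons vote_cons.
by case: (A e.2 x == y); case: yes in IH *; rewrite /=; ring.
Qed.

Definition nonneg_weights (P : seq expert) := forall e, List.In e P -> 0 <= e.1.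

Lemma nonneg_weights_cons e P :
  nonneg_weights (e :: P) -> 0 <= e.1 /\ nonneg_weights P.
Proof. by move=> eP_ge0; split=> [|c c_in]; apply: eP_ge0; [left|right]. Qed.

Lemma weight_ge0 P : nonneg_weights P -> 0 <= weight P.
Proof.
elim: P => [|e P IH]; first by rewrite /weight big_nil; lra.
by move=> /nonneg_weights_cons[e_ge0 /IH]; rewrite weight_cons; lra.
Qed.

Lemma In_le_weight P e : nonneg_weights P -> List.In e P -> e.1 <= weight P.
Proof.
elim: P => [|e' P IH] // /nonneg_weights_cons[e'_ge0 P_ge0] /= [<-|/(IH P_ge0)];
  have := weight_ge0 P_ge0; rewrite weight_cons; lra.
Qed.

Hypotheses (tau_gt0 : 0 < tau) (rho_gt0 : 0 < rho) (tau_rho_lt1 : tau + rho < 1).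

Lemma nonneg_update P x y yes : nonneg_weights P -> nonneg_weights (update P x y yes).
Proof.
move=> P_ge0 c /List.in_flat_map[e [/P_ge0 e_ge0]].
have tau_le1 : tau <= 1 by lra.
have rk_ge0 : 0 <= rho / INR k by apply/Rle_mult_inv_pos/INR_k_gt0; lra.
rewrite /children; case: yes; case: ifP => _ /=.
- by case=> [<-|[]].
- by case=> [<-|[<-|[]]] /=; nra.
- by case=> [<-|/List.in_map_iff[l [<- _]]] /=; nra.
- by case=> [<-|[]].
Qed.

Lemma nonneg_population hist : nonneg_weights (population hist).
Proof.
elim/last_ind: hist => [|hist t IH]; first by move=> e [<-|[]] /=; lra.
by rewrite population_rcons; apply: nonneg_update.
Qed.

Variable f : X -> 'I_k.

Definition labelled (zs : seq X) := [seq (z, f z) | z <- zs].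

Lemma std_mistakes_rcons (L : std_learner X 'I_k) h zs x :
  std_mistakes L f h (rcons zs x) =
  (std_mistakes L f h zs + (L (h ++ labelled zs) x != f x))%nat.
Proof.
elim: zs h => [|z zs IH] h /=; first by rewrite cats0 addn0.
by rewrite IH cat_rcons addnA.
Qed.

Definition mistakesA zs := std_mistakes A f [::] zs.

Definition gamma := rho / INR k.

Definition score (m l : nat) := gamma ^ m * tau ^ l.

Definition tracks_target (P : seq expert) (l : nat) :=
  exists zs w, List.In (w, labelled zs) P /\ score (mistakesA zs) l <= w.

Lemma gamma_gt0 : 0 < gamma.
Proof. exact/Rdiv_lt_0_compat/INR_k_gt0. Qed.

Lemma gamma_le : gamma <= 1 - tau.
Proof.
by have := Rdiv_le_self (Rlt_le _ _ rho_gt0) INR_k_ge1; rewrite /gamma; lra.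
Qed.

Lemma score_ge0 m l : 0 <= score m l.
Proof. by apply: Rmult_le_pos; apply: pow_le; have := gamma_gt0; lra. Qed.

Lemma score_le m m' l l' : (m <= m')%nat -> (l <= l')%nat -> score m' l' <= score m l.
Proof.
move=> le_m le_l; have gamma_pos := gamma_gt0; have gamma_lt := gamma_le.
apply: Rmult_le_compat; try apply: pow_le; try lra.
- by apply: Rle_pow_le1 le_m; lra.
- by apply: Rle_pow_le1 le_l; lra.
Qed.

Lemma score_lie m l : score m (l + 1) = score m l * tau.
Proof. by rewrite /score addn1 /=; ring. Qed.

Lemma score_mistake m l : score (m + 1) l = score m l * gamma.
Proof. by rewrite /score addn1 /=; ring. Qed.

Lemma children_track w zs x y lie l :
  score (mistakesA zs) l <= w ->
  exists zs' w',
    List.In (w', labelled zs') (children (w, labelled zs) x y ((y == f x) (+) lie))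
    /\ score (mistakesA zs') (l + lie) <= w'.
Proof.
move=> le_w.
have keep : score (mistakesA zs) (l + lie) <= w.
  by apply: Rle_trans le_w; apply: score_le => //; apply: leq_addr.
have lied : score (mistakesA zs) (l + 1) <= w * tau.
  by rewrite score_lie; apply: Rmult_le_compat_r; lra.
have erred c : gamma <= c -> A (labelled zs) x != f x ->
    score (mistakesA (rcons zs x)) (l + 0) <= w * c.
  move=> gamma_le_c mistake; have := score_ge0 (mistakesA zs) l; have := gamma_gt0.
  rewrite [mistakesA (rcons _ _)]std_mistakes_rcons mistake addn0 score_mistake.
  rewrite -/(mistakesA zs) => *.
  by apply: Rmult_le_compat; lra.
rewrite /children /=.
have [Ay|nAy] := eqVneq (A (labelled zs) x) y; have [yf|nyf] := eqVneq y (f x);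
  case: lie keep => /= keep.
- by exists zs, (w * tau); split; [left|].
- by exists zs, w; split; [left|].
- by exists zs, w; split; [left|].
- exists (rcons zs x), (w * gamma); split; last by apply: erred; [lra|rewrite Ay].
  right; rewrite /labelled map_rcons.
  apply: (List.in_map (fun l => (w * gamma, rcons _ (x, l)))).
  by apply: In_mem; rewrite mem_enum.
- by exists zs, w; split; [left|].
- exists (rcons zs x), (w * (1 - tau)); split.
    by left; rewrite /labelled map_rcons yf.
  by apply: erred; [exact: gamma_le|rewrite -yf].
- by exists zs, (w * tau); split; [right; left|].
- by exists zs, w; split; [left|].
Qed.

Lemma tracks_update P l x y lie :
  tracks_target P l -> tracks_target (update P x y ((y == f x) (+) lie)) (l + lie).
Proof.
move=> [zs [w [inP /(children_track x y lie)[zs' [w' [in_children le_w']]]]]].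
by exists zs', w'; split=> //; apply/List.in_flat_map; exists (w, labelled zs).
Qed.

Fixpoint transcript (h : seq (X * 'I_k * bool)) (xs : seq (X * bool)) :=
  if xs is (x, lie) :: xs' then
    let y := plurality_learner h x in
    let t := (x, y, (y == f x) (+) lie) in t :: transcript (rcons h t) xs'
  else [::].

Definition no_answers (ts : seq (X * 'I_k * bool)) := count (fun t => ~~ t.2) ts.

Lemma ag_mistakes_le_no_answers h xs :
  (ag_mistakes plurality_learner f h xs <= no_answers (transcript h xs) + count snd xs)%nat.
Proof.
elim: xs h => [|[x lie] xs IH] h //=; set y := plurality_learner h x.
by have := IH (rcons h (x, y, (y == f x) (+) lie)); case: (y == f x); case: lie => /=; lia.
Qed.

Lemma tracks_transcript h xs l :
  tracks_target (population h) l ->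
  tracks_target (population (h ++ transcript h xs)) (l + count snd xs).
Proof.
elim: xs h l => [|[x lie] xs IH] h l /=; first by rewrite cats0 addn0.
move=> tracks; rewrite -cat_rcons addnA; apply/IH.
by rewrite population_rcons; apply: tracks_update.
Qed.

Definition shrink := 1 - (1 - tau - rho) / INR k.

Lemma weight_update_plurality P x yes :
  weight (update P x (argmaxR y0 (vote P x)) yes) <= weight P * shrink ^ (~~ yes).
Proof.
rewrite weight_update /shrink; case: yes => /=; first lra.
have k_gt0 := INR_k_gt0; have := weight_le_plurality_vote P x.
set q := (1 - tau - rho) / INR k.
have -> : 1 - tau - rho = q * INR k by rewrite /q; field; lra.
have : 0 <= q by apply: Rle_mult_inv_pos; lra.
nra.
Qed.

Lemma weight_transcript h xs :
  weight (population (h ++ transcript h xs)) <=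
  weight (population h) * shrink ^ no_answers (transcript h xs).
Proof.
have shrink_ge0 : 0 <= shrink.
  by have := @Rdiv_le_self (1 - tau - rho) _ ltac:(lra) INR_k_ge1; rewrite /shrink; lra.
elim: xs h => [|[x lie] xs IH] h /=; first by rewrite cats0; lra.
rewrite -cat_rcons /no_answers /= -/(no_answers _) pow_add -Rmult_assoc.
apply: Rle_trans (IH _) _; apply: Rmult_le_compat_r; first exact: pow_le.
by rewrite population_rcons; apply: weight_update_plurality.
Qed.

Lemma score_le_shrink d eta xs :
  (forall zs, (mistakesA zs <= d)%nat) -> (count snd xs <= eta)%nat ->
  score d eta <= shrink ^ no_answers (transcript [::] xs).
Proof.
move=> mistakesA_le lies_le.
have start : tracks_target (population [::]) 0.
  by exists [::], 1; split; [left|rewrite /score /=; lra].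
have [zs [w [in_final le_w]]] := tracks_transcript xs start.
have weight0 : weight (population [::]) = 1 by rewrite weight_cons /weight big_nil /=; lra.
have := weight_transcript [::] xs; rewrite weight0 Rmult_1_l.
have := In_le_weight (@nonneg_population _) in_final => /=.
have := score_le (mistakesA_le zs) lies_le; rewrite add0n in le_w; lra.
Qed.

Lemma plurality_learner_mistakes d eta xs :
  (forall zs, (mistakesA zs <= d)%nat) -> (count snd xs <= eta)%nat ->
  INR (ag_mistakes plurality_learner f [::] xs) <=
  INR k / (1 - tau - rho) * (INR d * - ln gamma + INR eta * - ln tau) + INR eta.
Proof.
move=> mistakesA_le lies_le; set N := no_answers (transcript [::] xs).
have decay := score_le_shrink mistakesA_le lies_le; rewrite -/N in decay.
have k_gt0 := INR_k_gt0.
have t_lt1 : (1 - tau - rho) / INR k < 1.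
  by have := @Rdiv_le_self (1 - tau - rho) _ ltac:(lra) INR_k_ge1; lra.
have N_le : INR N <= INR k / (1 - tau - rho) * (INR d * - ln gamma + INR eta * - ln tau).
  have -> : INR N = INR k / (1 - tau - rho) * (INR N * ((1 - tau - rho) / INR k)).
    by field; lra.
  apply/Rmult_le_compat_l/(exponent_le_of_pow_le gamma_gt0 tau_gt0 t_lt1 decay).
  by apply: Rle_mult_inv_pos; lra.
have mistakes_le : (ag_mistakes plurality_learner f [::] xs <= N + eta)%nat.
  by apply: leq_trans (ag_mistakes_le_no_answers _ _) _; rewrite leq_add2l.
by have := le_INR _ _ (elimT leP mistakes_le); rewrite plus_INR; lra.
Qed.

End Population.

(* The choice tau = rho = 1/(u + 3), u = ln k, turns the bound of
   [plurality_learner_mistakes] into (1 + slack u) k u (d + eta). *)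
Definition slack (u : R) := (u + ln (u + 3)) / (u * (1 - 2 / (u + 3))) - 1.

Lemma ln_ge0 x : 1 <= x -> 0 <= ln x.
Proof. by move=> x_ge1; rewrite -ln_1; apply: ln_le_ln; lra. Qed.

Lemma slack_eq u : 0 < u ->
  slack u = (u * ln (u + 3) + 2 * u + 3 * ln (u + 3)) / ((u + 1) * u).
Proof. by move=> u_gt0; rewrite /slack; field; lra. Qed.

Lemma slack_mul u : 0 < u -> (1 + slack u) * u = (u + ln (u + 3)) / (1 - 2 / (u + 3)).
Proof. by move=> u_gt0; rewrite /slack; field; lra. Qed.

Lemma slack_ge0 u : 0 < u -> 0 <= slack u.
Proof.
move=> u_gt0; rewrite slack_eq //; have := @ln_ge0 (u + 3) ltac:(lra).
by move=> L_ge0; apply: Rle_mult_inv_pos; nra.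
Qed.

Lemma ln_le_2sqrt y : 0 < y -> ln y <= 2 * sqrt y.
Proof.
move=> y_gt0; have sqrt_gt0 : 0 < sqrt y by apply: sqrt_lt_R0.
rewrite -{1}(sqrt_sqrt y); last lra.
by rewrite ln_mult //; have := ln_le_sub1 sqrt_gt0; lra.
Qed.

Lemma slack_le u : 1 <= u -> slack u <= 18 / sqrt u.
Proof.
move=> u_ge1; rewrite slack_eq; last lra.
set L := ln (u + 3); set r := sqrt u.
have r_ge1 : 1 <= r by rewrite /r -sqrt_1; apply: sqrt_le_1_alt.
have rr : r * r = u by apply: sqrt_sqrt; lra.
have L_ge0 : 0 <= L by apply: ln_ge0; lra.
have L_le : L <= 4 * r.
  apply: Rle_trans (ln_le_2sqrt _) _; first lra.
  suff : sqrt (u + 3) <= 2 * r by lra.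
  by rewrite -(sqrt_square (2 * r)); [apply: sqrt_le_1_alt; nra|lra].
apply: (Rmult_le_reg_r ((u + 1) * u * r)); first nra.
have -> : (u * L + 2 * u + 3 * L) / ((u + 1) * u) * ((u + 1) * u * r) =
          (u * L + 2 * u + 3 * L) * r by field; lra.
have -> : 18 / r * ((u + 1) * u * r) = 18 * (u + 1) * u by field; lra.
rewrite -rr; nra.
Qed.

Definition nat_floor (x : R) : nat := Z.to_nat (Zfloor x).

Lemma nat_floor_le x : 0 <= x -> INR (nat_floor x) <= x.
Proof.
move=> x_ge0; have floor_ge0 := @Zfloor_lub 0 x x_ge0.
by rewrite /nat_floor INR_IZR_INZ Znat.Z2Nat.id //; have := Zfloor_bound x; lra.
Qed.

Lemma le_nat_floor x n : INR n <= x -> (n <= nat_floor x)%nat.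
Proof.
rewrite INR_IZR_INZ => /Zfloor_lub le_floor.
by apply/leP; rewrite /nat_floor; lia.
Qed.

Lemma slack_ln_cv : Un_cv (fun n => slack (ln (INR n))) 0.
Proof.
move=> e e_gt0; set T := 1 + (18 / e) ^ 2.
have q_gt0 : 0 < 18 / e by apply: Rdiv_lt_0_compat; lra.
exists (nat_floor (exp T)).+1 => n /leP n_ge.
have exp_lt : exp T < INR n.
  by apply: Rnot_le_lt => /le_nat_floor; lia.
have T_le : T <= ln (INR n).
  by rewrite -(ln_exp T); apply: ln_le_ln; [apply: exp_pos|lra].
have sqrt_gt : 18 / e < sqrt (ln (INR n)).
  apply: Rlt_le_trans (sqrt_le_1_alt _ _ T_le).
  by rewrite -(sqrt_square (18 / e)); [apply: sqrt_lt_1_alt; rewrite /T /=; nra|lra].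
rewrite /R_dist Rminus_0_r Rabs_pos_eq; last by apply: slack_ge0; rewrite /T /= in T_le; nra.
apply: Rle_lt_trans (slack_le _) _; first by rewrite /T /= in T_le; nra.
have := Rinv_lt_contravar _ _
  (Rmult_lt_0_compat _ _ q_gt0 (Rlt_trans _ _ _ q_gt0 sqrt_gt)) sqrt_gt.
have : 18 * / (18 / e) = e by field; lra.
rewrite /Rdiv; lra.
Qed.

Definition split_rate (k : nat) : R := / (ln (INR k) + 3).

Lemma ln_INR_gt_half k : (2 <= k)%nat -> / 2 < ln (INR k).
Proof.
move=> k_ge2; have k_ge2R : 2 <= INR k by apply/(le_INR 2)/leP.
by apply: Rlt_le_trans ln_lt_2 (ln_le_ln _ _); lra.
Qed.

Lemma slack_bound_ge0 k n :
  (2 <= k)%nat -> 0 <= (1 + slack (ln (INR k))) * INR k * ln (INR k) * INR n.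
Proof.
move=> /ln_INR_gt_half u_gt; have := @slack_ge0 (ln (INR k)) ltac:(lra).
have := pos_INR n; have := pos_INR k => *.
by repeat apply: Rmult_le_pos; lra.
Qed.

Lemma plurality_learner_bound (X : Type) (k : nat) (A : std_learner X 'I_k) (y0 : 'I_k)
    (f : X -> 'I_k) (d eta : nat) (xs : seq (X * bool)) :
  (2 <= k)%nat ->
  (forall zs, (std_mistakes A f [::] zs <= d)%nat) -> (count snd xs <= eta)%nat ->
  INR (ag_mistakes (plurality_learner A y0 (split_rate k) (split_rate k)) f [::] xs) <=
  (1 + slack (ln (INR k))) * INR k * ln (INR k) * INR (d + eta).
Proof.
move=> k_ge2 mistakesA_le lies_le.
have k_ge2R : 2 <= INR k by apply/(le_INR 2)/leP.
have u_gt := ln_INR_gt_half k_ge2.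
have r_def : split_rate k = / (ln (INR k) + 3) by [].
move: (split_rate k) r_def => r r_def.
have lnlnk_ge0 : 0 <= ln (ln (INR k) + 3) by apply: ln_ge0; lra.
have r_gt0 : 0 < r by rewrite r_def; apply: Rinv_0_lt_compat; lra.
have r_le : r <= / 3 by rewrite r_def; apply: Rinv_le_contravar; lra.
have ln_r : - ln r = ln (ln (INR k) + 3) by rewrite r_def ln_Rinv; lra.
have ln_gamma : - ln (r / INR k) = ln (INR k) + ln (ln (INR k) + 3).
  by rewrite /Rdiv ln_mult ?ln_Rinv; try apply: Rinv_0_lt_compat; lra.
have := @plurality_learner_mistakes X k A y0 r r r_gt0 r_gt0 ltac:(lra) f d eta xs
  mistakesA_le lies_le.
rewrite ln_gamma ln_r plus_INR => /Rle_trans; apply.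
have c_eq : 1 - r - r = 1 - 2 / (ln (INR k) + 3) by rewrite r_def; field; lra.
have c_gt0 : 0 < 1 - r - r by lra.
set K := INR k / (1 - r - r).
have K_ge : INR k <= K.
  have : K * (1 - r - r) = INR k by rewrite /K; field; lra.
  have : 0 <= K by apply: Rle_mult_inv_pos; lra.
  nra.
have -> : (1 + slack (ln (INR k))) * INR k * ln (INR k) =
          K * (ln (INR k) + ln (ln (INR k) + 3)).
  rewrite [_ * INR k]Rmult_comm Rmult_assoc slack_mul; last lra.
  by rewrite /K c_eq /Rdiv; ring.
have : 1 <= K * ln (INR k) by nra.
have := pos_INR d; have := pos_INR eta; nra.
Qed.

Lemma ag_bound_of_std_bound (X : Type) (k : nat) (F : (X -> 'I_k) -> Prop) (eta d : nat) :
  (2 <= k)%nat -> std_bound F d ->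
  ag_bound F eta (nat_floor ((1 + slack (ln (INR k))) * INR k * ln (INR k) * INR (d + eta))).
Proof.
move=> k_ge2 [A A_bound].
exists (plurality_learner A (Ordinal k_ge2) (split_rate k) (split_rate k)) => f Ff xs lies.
by apply/le_nat_floor/plurality_learner_bound => // zs; apply: A_bound.
Qed.

Lemma opt_ag_le (X : Type) (Y : eqType) (F : (X -> Y) -> Prop) (eta m : nat) :
  ag_bound F eta m -> exists a, is_opt_ag F eta a /\ (a <= m)%nat.
Proof.
move=> bound_m.
have [a [[bound_a min_a] _]] := Wf_nat.dec_inh_nat_subset_has_unique_least_element
  (ag_bound F eta) (fun m => classic (ag_bound F eta m)) (ex_intro _ m bound_m).
exists a; split; last exact/leP/min_a.
by split=> // m' /min_a/leP.
Qed.

Close Scope R_scope.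

Theorem mainTheorem6 :
  exists eps : nat -> R, Un_cv eps 0%R /\
    forall k : nat, (2 <= k)%N ->
    forall (X : Type) (F : (X -> 'I_k) -> Prop) (eta d : nat),
      is_opt_std F d ->
      exists a : nat, is_opt_ag F eta a /\
        (INR a <= (1 + eps k) * INR k * ln (INR k) * INR (d + eta))%R.
Proof.
exists (fun k => slack (ln (INR k))); split; first exact: slack_ln_cv.
move=> k k_ge2 X F eta d [std_d _].
have [a [opt_a a_le]] := opt_ag_le (ag_bound_of_std_bound eta k_ge2 std_d).
exists a; split=> //.
by apply: Rle_trans (nat_floor_le (slack_bound_ge0 _ k_ge2)); apply/le_INR/leP.
Qed.
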